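(* Let $A$ be a $d\times n$ integer matrix with columns $\underline a_1,\dots,\underline a_n$, put $\underline a_0=0$, and let $\widetilde A$ be the $(d+1)\times(n+1)$ matrix with columns $(1,\underline a_i)$, $i=0,\dots,n$. Assume $\mathbb{Z}\widetilde A=\mathbb{Z}^{d+1}$, $\mathbb{N}\widetilde A=\mathbb{Z}^{d+1}\cap\mathbb{R}_{\geq0}\widetilde A$, and $\mathrm{int}(\mathbb{N}\widetilde A)=\mathbb{N}\widetilde A+\widetilde c$ for some $\widetilde c\in\mathbb{N}\widetilde A$. For $u\in\{0,\dots,n\}$ let $A_u$ be the $d\times n$ matrix with columns $\underline a_i-\underline a_u$, $i\in\{0,\dots,n\}\setminus\{u\}$. Then (1) $\mathbb{Z}A_u=\mathbb{Z}^d$; (2) $\mathbb{N}A_u=\mathbb{Z}^d\cap\mathbb{R}_{\geq0}A_u$; (3) $\mathrm{int}(\mathbb{N}A_u)=\mathbb{N}A_u+c$ for some $c\in\mathbb{N}A_u$.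
   Context: For an integer matrix $M$ with $m$ rows, $\mathbb{Z}M$, $\mathbb{N}M$, $\mathbb{R}_{\ge0}M$ denote the group, semigroup and real cone generated by its columns, and $\mathrm{int}(\mathbb{N}M)=\mathbb{Z}^m\cap(\mathbb{R}_{\geq0}M)^\circ$ with $(\cdot)^\circ$ the topological interior. *)

From HB Require Import structures.
From mathcomp Require Import all_boot all_order all_algebra.
From mathcomp Require Import reals.
Set Implicit Arguments. Unset Strict Implicit. Unset Printing Implicit Defensive.
Import Order.TTheory GRing.Theory Num.Theory.
Local Open Scope ring_scope.

Definition Zgen m n (M : 'M[int]_(m, n)) (x : 'cV[int]_m) : Prop :=
  exists l : 'cV[int]_n, x = M *m l.

Definition Ngen m n (M : 'M[int]_(m, n)) (x : 'cV[int]_m) : Prop :=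
  exists l : 'cV[int]_n, (forall j, 0 <= l j 0) /\ x = M *m l.

Definition Rcone (R : realType) m n (M : 'M[int]_(m, n)) (x : 'cV[R]_m) : Prop :=
  exists l : 'cV[R]_n, (forall j, 0 <= l j 0) /\ x = map_mx (fun z : int => z%:~R) M *m l.

Arguments Rcone R {m n} M x.

(* topological interior in R^m (product = sup-norm topology) *)
Definition interior_pt (R : realType) m (S : 'cV[R]_m -> Prop) (x : 'cV[R]_m) : Prop :=
  exists e : R, 0 < e /\ forall y : 'cV[R]_m, (forall i, `|y i 0 - x i 0| < e) -> S y.

(* int(NM) = Z^m ∩ (R_{>=0} M)° *)
Definition intN (R : realType) m n (M : 'M[int]_(m, n)) (x : 'cV[int]_m) : Prop :=
  interior_pt (Rcone R M) (map_mx (fun z : int => z%:~R) x).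

Definition gen_Zm m n (M : 'M[int]_(m, n)) : Prop := forall x, Zgen M x.
Definition normal_sat (R : realType) m n (M : 'M[int]_(m, n)) : Prop :=
  forall x, Ngen M x <-> Rcone R M (map_mx (fun z : int => z%:~R) x).
Definition gorenstein_like (R : realType) m n (M : 'M[int]_(m, n)) : Prop :=
  exists c, Ngen M c /\ forall x, intN R M x <-> exists y, Ngen M y /\ x = y + c.

Definition Abar d n (A : 'M[int]_(d, n)) : 'M[int]_(d, 1 + n) := row_mx 0 A.

Definition Atilde d n (A : 'M[int]_(d, n)) : 'M[int]_(1 + d, 1 + n) :=
  col_mx (const_mx 1) (Abar A).

Definition Au d n (A : 'M[int]_(d, n)) (u : 'I_(1 + n)) : 'M[int]_(d, n) :=
  \matrix_(k, j) (Abar A k (lift u j) - Abar A k u).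

(* The map (t, y) |-> y - t a_u sends each column (1, a_i) of tilde A to the
   column a_i - a_u of A_u (and (1, a_u) to 0), and x |-> (t, x + t a_u) is a
   section of it for every t.  A nonnegative combination l of the columns of A_u
   lifts to one of tilde A by giving (1, a_u) the coefficient t - sum l, so
   generation, saturation and the interior all descend from tilde A to A_u.  The
   one analytic point is that the lift of an interior point x of R_{>=0} A_u is
   interior in R_{>=0} tilde A as soon as t exceeds a bound on the coefficient
   sums of representations of all points near x; such a bound exists because
   every point near x is a convex combination of x and the vertices x +- δ e_i
   of a cross-polytope inside the cone. *)

From HB Require Import structures.
From mathcomp Require Import all_boot all_order all_algebra.
From mathcomp Require Import reals.
From mathcomp Require Import ring lra.
Set Implicit Arguments. Unset Strict Implicit. Unset Printing Implicit Defensive.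
Import Order.TTheory GRing.Theory Num.Theory.
Local Open Scope ring_scope.

(* [homog (Abar A)] and [recenter (Abar A) u] are [Atilde A] and [Au A u]. *)
Section Homogenization.
Variables (K : comNzRingType) (d n : nat) (M : 'M[K]_(d, 1 + n)) (u : 'I_(1 + n)).

Definition homog : 'M[K]_(1 + d, 1 + n) := col_mx (const_mx 1) M.
Definition recenter : 'M[K]_(d, n) := \matrix_(k, j) (M k (lift u j) - M k u).
Definition dehomog (X : 'cV[K]_(1 + d)) : 'cV[K]_d := dsubmx X - usubmx X 0 0 *: col u M.
Definition rehomog (t : K) (x : 'cV[K]_d) : 'cV[K]_(1 + d) := col_mx t%:M (x + t *: col u M).
Definition fill_sum (t : K) (l : 'cV[K]_n) : 'cV[K]_(1 + n) :=
  \col_i (if unlift u i is Some j then l j 0 else t - \sum_j l j 0).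

Lemma homog_mul L : homog *m L = col_mx (\sum_i L i 0)%:M (M *m L).
Proof.
rewrite mul_col_mx; congr col_mx; apply/matrixP => i j.
by rewrite (ord1 i) (ord1 j) !mxE; apply: eq_bigr => k _; rewrite mxE mul1r.
Qed.

Lemma recenter_mul L : recenter *m row' u L = M *m L - (\sum_i L i 0) *: col u M.
Proof.
apply/matrixP => k j; rewrite (ord1 j) !mxE (bigD1_ord u) //= (bigD1_ord u) //=.
under eq_bigr do rewrite !mxE mulrBl.
by rewrite sumrB -mulr_sumr; ring.
Qed.

Lemma dehomog_homog_mul L : dehomog (homog *m L) = recenter *m row' u L.
Proof. by rewrite recenter_mul homog_mul /dehomog col_mxKu col_mxKd mxE mulr1n. Qed.

Lemma dehomog_rehomog t x : dehomog (rehomog t x) = x.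
Proof. by rewrite /dehomog col_mxKu col_mxKd mxE mulr1n addrK. Qed.

Lemma rehomog_dehomog X : rehomog (usubmx X 0 0) (dehomog X) = X.
Proof. by rewrite /rehomog /dehomog subrK -mx11_scalar vsubmxK. Qed.

Lemma dehomogD X Y : dehomog (X + Y) = dehomog X + dehomog Y.
Proof.
rewrite /dehomog linearD /= [usubmx (X + Y)]linearD /= mxE scalerDl.
by rewrite opprD addrACA.
Qed.

Lemma sum_fill_sum t l : \sum_i fill_sum t l i 0 = t.
Proof.
rewrite (bigD1_ord u) //= mxE unlift_none.
by under eq_bigr do rewrite mxE liftK; rewrite subrK.
Qed.

Lemma row'_fill_sum t l : row' u (fill_sum t l) = l.
Proof. by apply/matrixP => j k; rewrite !mxE liftK (ord1 k). Qed.

Lemma homog_mul_fill_sum t l : homog *m fill_sum t l = rehomog t (recenter *m l).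
Proof.
rewrite homog_mul sum_fill_sum; congr col_mx.
by rewrite -{2}(row'_fill_sum t l) recenter_mul sum_fill_sum subrK.
Qed.

End Homogenization.

Section MapHomogenization.
Variables (K K' : comNzRingType) (f : {rmorphism K -> K'}).
Variables (d n : nat) (M : 'M[K]_(d, 1 + n)) (u : 'I_(1 + n)).

Lemma map_homog : map_mx f (homog M) = homog (map_mx f M).
Proof. by rewrite map_col_mx map_const_mx rmorph1. Qed.

Lemma map_recenter : map_mx f (recenter M u) = recenter (map_mx f M) u.
Proof. by apply/matrixP => i j; rewrite !mxE rmorphB. Qed.

Lemma map_dehomog X : map_mx f (dehomog M u X) = dehomog (map_mx f M) u (map_mx f X).
Proof. by apply/matrixP => i j; rewrite !mxE rmorphB rmorphM. Qed.

Lemma map_rehomog t x :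
  map_mx f (rehomog M u t x) = rehomog (map_mx f M) u (f t) (map_mx f x).
Proof.
by rewrite map_col_mx; congr col_mx; apply/matrixP => i j;
  rewrite !mxE ?rmorphMn ?rmorphD ?rmorphM.
Qed.

End MapHomogenization.

Section Cone.
Variables (K : numDomainType) (m n : nat) (B : 'M[K]_(m, n)).

Definition cone (x : 'cV[K]_m) : Prop :=
  exists l : 'cV[K]_n, (forall j, 0 <= l j 0) /\ x = B *m l.

Definition bounded_cone (s : K) (x : 'cV[K]_m) : Prop :=
  exists l : 'cV[K]_n, [/\ forall j, 0 <= l j 0, x = B *m l & \sum_j l j 0 <= s].

Lemma cone_bounded_cone x : cone x -> exists s, bounded_cone s x.
Proof. by case=> l [l0 ->]; exists (\sum_j l j 0), l. Qed.

Lemma bounded_cone_ge0 s x : bounded_cone s x -> 0 <= s.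
Proof. by case=> l [l0 _]; apply: le_trans; apply: sumr_ge0. Qed.

Lemma bounded_cone_le s s' x : s <= s' -> bounded_cone s x -> bounded_cone s' x.
Proof. by move=> ss' [l [l0 -> ls]]; exists l; split=> //; apply: le_trans ss'. Qed.

Lemma bounded_cone0 : bounded_cone 0 0.
Proof.
by exists 0; split=> [j||]; rewrite ?mxE ?mulmx0 // big1 // => j _; rewrite mxE.
Qed.

Lemma bounded_coneD s1 s2 x1 x2 :
  bounded_cone s1 x1 -> bounded_cone s2 x2 -> bounded_cone (s1 + s2) (x1 + x2).
Proof.
case=> l1 [l10 -> ls1] [l2 [l20 -> ls2]]; exists (l1 + l2); split.
- by move=> j; rewrite mxE addr_ge0.
- by rewrite mulmxDr.
- by under eq_bigr do rewrite mxE; rewrite big_split lerD.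
Qed.

Lemma bounded_coneZ c s x : 0 <= c -> bounded_cone s x -> bounded_cone (c * s) (c *: x).
Proof.
move=> c0 [l [l0 -> ls]]; exists (c *: l); split.
- by move=> j; rewrite mxE mulr_ge0.
- by rewrite scalemxAr.
- by under eq_bigr do rewrite mxE; rewrite -mulr_sumr ler_wpM2l.
Qed.

Lemma bounded_cone_sum (I : finType) (s : I -> K) (x : I -> 'cV[K]_m) :
  (forall i, bounded_cone (s i) (x i)) -> bounded_cone (\sum_i s i) (\sum_i x i).
Proof.
move=> sx; apply: (big_ind2 bounded_cone) => //; first exact: bounded_cone0.
by move=> s1 x1 s2 x2; apply: bounded_coneD.
Qed.

Lemma cone_common_bound (I : finType) (x : I -> 'cV[K]_m) :
  (forall i, cone (x i)) -> exists s, forall i, bounded_cone s (x i).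
Proof.
move=> cx; have [s sx] := fin_all_exists (fun i => cone_bounded_cone (cx i)).
exists (\sum_i s i) => i; apply: bounded_cone_le (sx i).
by rewrite (bigD1 i) //= lerDl sumr_ge0 // => k _; apply: bounded_cone_ge0 (sx k).
Qed.

End Cone.

Section HomogenizedCones.
Variables (K : numDomainType) (d n : nat) (M : 'M[K]_(d, 1 + n)) (u : 'I_(1 + n)).

Lemma cone_dehomog X : cone (homog M) X -> cone (recenter M u) (dehomog M u X).
Proof.
case=> L [L0 ->]; exists (row' u L); split; first by move=> j; rewrite mxE.
by rewrite dehomog_homog_mul.
Qed.

Lemma cone_rehomog t x : bounded_cone (recenter M u) t x -> cone (homog M) (rehomog M u t x).
Proof.
case=> l [l0 -> l_le]; exists (fill_sum u t l); split; last by rewrite homog_mul_fill_sum.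
by move=> i; rewrite mxE; case: unlift => [j|] //; rewrite subr_ge0.
Qed.

End HomogenizedCones.

Lemma Zgen_dehomog d n (M : 'M[int]_(d, 1 + n)) u X :
  Zgen (homog M) X -> Zgen (recenter M u) (dehomog M u X).
Proof. by case=> L ->; exists (row' u L); rewrite dehomog_homog_mul. Qed.

Lemma cross_polytope_decomp (K : comNzRingType) m (x w : 'cV[K]_m) (β v : 'I_m -> K) :
  (forall i, β i * v i = w i 0) ->
  x + w = (1 - \sum_i β i) *: x + \sum_i β i *: (x + v i *: delta_mx i 0).
Proof.
move=> βv; have -> : \sum_i β i *: (x + v i *: delta_mx i 0) = (\sum_i β i) *: x + w.
  under eq_bigr do rewrite scalerDr scalerA βv.
  rewrite big_split /= -scaler_suml {2}(matrix_sum_delta w); congr (_ + _).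
  by apply: eq_bigr => i _; rewrite big_ord1.
by rewrite addrA -scalerDl subrK scale1r.
Qed.

Section Interior.
Variable R : realType.

Lemma interior_bounded_cone m n (B : 'M[R]_(m, n)) x : interior_pt (cone B) x ->
  exists s e : R, 0 < e /\
    forall z : 'cV_m, (forall i, `|z i 0 - x i 0| < e) -> bounded_cone B s z.
Proof.
case=> e0 [e0_gt0 int_x]; pose δ := e0 / 2.
have δ_gt0 : 0 < δ by rewrite divr_gt0.
pose sδ (b : bool) := if b then δ else - δ.
pose vertex (p : option ('I_m * bool)) :=
  if p is Some (i, b) then x + sδ b *: delta_mx i 0 else x.
have [s vertex_s] : exists s, forall p, bounded_cone B s (vertex p).
  apply: cone_common_bound => -[[i b]|] /=; apply: int_x => k; last by rewrite subrr normr0.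
  rewrite !mxE addrAC subrr add0r normrM.
  have : `|sδ b| < e0 by rewrite /sδ; case: b; rewrite ?normrN gtr0_norm /δ //; lra.
  by rewrite andbT; case: (k == i); rewrite ?normr1 ?mulr1 // normr0 mulr0.
exists s, (δ / m.+1%:R); split=> [|z near_z]; first by rewrite divr_gt0.
pose w := z - x; pose β i := `|w i 0| / δ.
have β_ge0 i : 0 <= β i by rewrite divr_ge0 // ltW.
have β_sign i : β i * sδ (0 <= w i 0) = w i 0.
  rewrite /β /sδ; case: ifPn => [/ger0_norm-> | /negbTE w_lt0].
    by rewrite mulfVK ?gt_eqF.
  by rewrite ltr0_norm ?ltNge ?w_lt0 // mulNr mulrNN mulfVK ?gt_eqF.
have β_le i : β i <= (m.+1%:R)^-1.
  by rewrite ler_pdivrMr // mulrC !mxE ltW // near_z.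
have sum_β_le1 : \sum_i β i <= 1.
  apply: (le_trans (ler_sum _ (fun i _ => β_le i))).
  rewrite sumr_const card_ord -[X in X <= _]mulr_natr mulrC.
  by rewrite ler_pdivrMr ?ltr0Sn // mul1r ler_nat.
have -> : z = x + w by rewrite addrC subrK.
rewrite (cross_polytope_decomp x β_sign).
apply: (bounded_cone_le (s := (1 - \sum_i β i) * s + \sum_i β i * s)).
  by rewrite -mulr_suml -mulrDl subrK mul1r.
have α_ge0 : 0 <= 1 - \sum_i β i by rewrite subr_ge0.
apply: bounded_coneD; first exact: bounded_coneZ α_ge0 (vertex_s None).
apply: (bounded_cone_sum (s := fun i => β i * s)) => i.
exact: bounded_coneZ (β_ge0 i) (vertex_s (Some (i, 0 <= w i 0))).
Qed.

Section HomogenizedInterior.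
Variables (d n : nat) (M : 'M[R]_(d, 1 + n)) (u : 'I_(1 + n)).

Lemma interior_dehomog X :
  interior_pt (cone (homog M)) X -> interior_pt (cone (recenter M u)) (dehomog M u X).
Proof.
case=> e [e_gt0 int_X]; exists e; split=> // z near_z.
set t := usubmx X 0 0; rewrite -(dehomog_rehomog M u t z); apply/cone_dehomog/int_X => i.
have X_eq : X = rehomog M u t (dehomog M u X) by rewrite rehomog_dehomog.
rewrite [in X in _ - X]X_eq -(splitK i); case: (split i) => k /=.
  by rewrite !col_mxEu subrr normr0.
by move: (near_z k); rewrite !col_mxEd /t !mxE; congr (`|_| < _); ring.
Qed.

Lemma dehomog_near t x (X : 'cV[R]_(1 + d)) (e : R) :
  (forall i, `|X i 0 - rehomog M u t x i 0| < e) ->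
  `|usubmx X 0 0 - t| < e /\
  (forall k, `|dehomog M u X k 0 - x k 0| < e * (1 + \sum_k `|M k u|)).
Proof.
move=> near_X; have near_t : `|X (lshift d 0) 0 - t| < e.
  by have := near_X (lshift d 0); rewrite col_mxEu !mxE mulr1n.
split=> [|k]; first by rewrite mxE.
have := near_X (rshift 1 k); rewrite col_mxEd !mxE.
set p := X _ 0; set s := X _ 0; set a := M k u => near_p.
have a_le : `|a| <= \sum_k `|M k u| by rewrite (bigD1 k) //= lerDl sumr_ge0.
have -> : p - s * a - x k 0 = (p - (x k 0 + t * a)) - (s - t) * a by ring.
rewrite mulrDr mulr1; apply: le_lt_trans (ler_normB _ _) _; rewrite normrM.
apply: ltr_leD => //; apply: ler_pM => //; exact: ltW.
Qed.

Lemma interior_rehomog x : interior_pt (cone (recenter M u)) x ->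
  exists T : int, interior_pt (cone (homog M)) (rehomog M u T%:~R x).
Proof.
move=> /interior_bounded_cone [s [e [e_gt0 near_bounded]]].
set a := 1 + \sum_k `|M k u|; have a_gt0 : 0 < a by rewrite ltr_wpDr ?sumr_ge0.
pose ε := Num.min 1 (e / a); have ε_le1 : ε <= 1 by rewrite ge_min lexx.
have εa_le : ε * a <= e by rewrite -ler_pdivlMr // ge_min lexx orbT.
exists (Num.ceil s + 1), ε; split=> [|X near_X]; first by rewrite lt_min ltr01 divr_gt0.
have [near_t near_x] := dehomog_near near_X; set t := usubmx X 0 0 in near_t near_x *.
have s_le_t : s <= t.
  have := ceil_ge s; have := ler_norm ((Num.ceil s + 1)%:~R - t).
  rewrite distrC rmorphD rmorph1 /= in near_t *; lra.
suff: cone (homog M) (rehomog M u t (dehomog M u X)) by rewrite rehomog_dehomog.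
apply/cone_rehomog/(bounded_cone_le s_le_t)/near_bounded => k.
exact: lt_le_trans (near_x k) εa_le.
Qed.

End HomogenizedInterior.
End Interior.

Section IntegerHomogenization.
Variables (R : realType) (d n : nat) (M : 'M[int]_(d, 1 + n)) (u : 'I_(1 + n)).
Local Notation toR := (map_mx (fun z : int => z%:~R : R)).

Lemma RconeE m k (N : 'M[int]_(m, k)) : Rcone R N = cone (toR N).
Proof. by []. Qed.

Lemma intN_dehomog X : intN R (homog M) X -> intN R (recenter M u) (dehomog M u X).
Proof.
by rewrite /intN !RconeE map_homog map_dehomog map_recenter; apply: interior_dehomog.
Qed.

Lemma intN_rehomog x : intN R (recenter M u) x ->
  exists T : int, intN R (homog M) (rehomog M u T x).
Proof.
rewrite /intN !RconeE map_recenter => /interior_rehomog [T int_T]; exists T.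
by rewrite map_homog map_rehomog.
Qed.

Lemma gen_Zm_recenter : gen_Zm (homog M) -> gen_Zm (recenter M u).
Proof. by move=> gen x; rewrite -(dehomog_rehomog M u 0 x); apply: Zgen_dehomog. Qed.

Lemma normal_sat_recenter : normal_sat R (homog M) -> normal_sat R (recenter M u).
Proof.
move=> nsat x; split=> [[l [l0 ->]] | /cone_bounded_cone [s bounded_s]].
  by exists (toR l); split=> [j|]; rewrite ?mxE ?ler0z // map_mxM.
rewrite -(dehomog_rehomog M u (Num.ceil s) x); apply/cone_dehomog/nsat.
rewrite RconeE map_rehomog map_homog; apply: cone_rehomog.
by rewrite -map_recenter; apply: bounded_cone_le bounded_s; apply: ceil_ge.
Qed.

Lemma gorenstein_like_recenter :
  gorenstein_like R (homog M) -> gorenstein_like R (recenter M u).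
Proof.
case=> c [Nc int_c]; exists (dehomog M u c); split=> [|x]; first exact: cone_dehomog.
split=> [/intN_rehomog [T /int_c [y [Ny lift_eq]]] | [y [Ny ->]]].
  exists (dehomog M u y); split; first exact: cone_dehomog.
  by rewrite -dehomogD -lift_eq dehomog_rehomog.
have [s /cone_rehomog N_lift] := cone_bounded_cone Ny.
rewrite -(dehomog_rehomog M u s y) -dehomogD; apply/intN_dehomog/int_c.
by exists (rehomog M u s y); split.
Qed.

End IntegerHomogenization.

Theorem lemma3p4 (R : realType) (d n : nat) (A : 'M[int]_(d, n)) :
  gen_Zm (Atilde A) ->
  normal_sat R (Atilde A) ->
  gorenstein_like R (Atilde A) ->
  forall u : 'I_(1 + n),
    [/\ gen_Zm (Au A u), normal_sat R (Au A u) & gorenstein_like R (Au A u)].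
Proof.
move=> gen nsat gor u; split.
- exact: gen_Zm_recenter.
- exact: normal_sat_recenter.
- exact: gorenstein_like_recenter.
Qed.
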